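(* Let $\gamma$ and $\gamma'$ be two circular curves that are mutually monotone. Then $\gamma$ and $\gamma'$ have $O(m+m')$ proper intersection points, where $m=\lVert\gamma\rVert$ and $m'=\lVert\gamma'\rVert$.
   Context: A circular curve is a curve in $\mathbb{R}^2$ homeomorphic to a closed interval that is the union of finitely many circular arcs (connected portions of circles, segments included) meeting only at endpoints; its complexity $\lVert\cdot\rVert$ is the number of its arcs plus vertices. A curve $\gamma$ is $\vec v$-monotone for $\vec v\in\mathbb{S}^1$ if there is a homeomorphism $f:[0,1]\to\gamma$ with $\langle\vec v,f(a)\rangle<\langle\vec v,f(b)\rangle$ whenever $a<b$; $\gamma,\gamma'$ are mutually monotone if some $\vec v\in\mathbb{S}^1$ makes both $\vec v$-monotone. A point $p$ is a proper intersection point of $\gamma$ and $\gamma'$ if $p\in\gamma\cap\gamma'$ and $p$ is isolated in $\gamma\cap\gamma'$. *)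

From Stdlib Require Import Reals Lra List.
Import ListNotations.
Open Scope R_scope.

Definition point := (R * R)%type.
Definition pset := point -> Prop.

Definition dist (p q : point) : R :=
  sqrt ((fst p - fst q) ^ 2 + (snd p - snd q) ^ 2).
Definition inner (v p : point) : R := fst v * fst p + snd v * snd p.

Definition point_eq_dec (p q : point) : {p = q} + {p <> q}.
Proof.
  destruct p as [a b], q as [c d].
  destruct (Req_EM_T a c) as [H1|H1]; destruct (Req_EM_T b d) as [H2|H2].
  - left; subst; reflexivity.
  - right; intros H; inversion H; contradiction.
  - right; intros H; inversion H; contradiction.
  - right; intros H; inversion H; contradiction.
Defined.

Definition unit_interval (a : R) : Prop := 0 <= a <= 1.

Definition homeo_unit_interval (f : R -> point) (S : pset) : Prop :=
  (forall a, unit_interval a -> forall eps, 0 < eps -> exists delta, 0 < delta /\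
     forall b, unit_interval b -> Rabs (a - b) < delta -> dist (f a) (f b) < eps) /\
  (forall a b, unit_interval a -> unit_interval b -> f a = f b -> a = b) /\
  (forall p, S p <-> exists a, unit_interval a /\ f a = p) /\
  (* continuity of the inverse map S -> [0,1] *)
  (forall a, unit_interval a -> forall eps, 0 < eps -> exists delta, 0 < delta /\
     forall b, unit_interval b -> dist (f a) (f b) < delta -> Rabs (a - b) < eps).

Definition homeomorphic_to_interval (S : pset) : Prop :=
  exists f : R -> point, homeo_unit_interval f S.

(* Circular arcs: nondegenerate segments, or proper arcs of circles of
   positive radius (angles t0 < t1 < t0 + 2 PI). *)
Inductive arc : Type :=
  | Seg (p q : point)
  | Circ (c : point) (r t0 t1 : R).

Definition arc_valid (a : arc) : Prop :=
  match a with
  | Seg p q => p <> q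
  | Circ _ r t0 t1 => 0 < r /\ t0 < t1 /\ t1 < t0 + 2 * PI
  end.

Definition arc_pts (a : arc) : pset :=
  match a with
  | Seg p q => fun x => exists t, 0 <= t <= 1 /\
      x = ((1 - t) * fst p + t * fst q, (1 - t) * snd p + t * snd q)
  | Circ c r t0 t1 => fun x => exists t, t0 <= t <= t1 /\
      x = (fst c + r * cos t, snd c + r * sin t)
  end.

Definition arc_src (a : arc) : point :=
  match a with
  | Seg p _ => p
  | Circ c r t0 _ => (fst c + r * cos t0, snd c + r * sin t0)
  end.

Definition arc_tgt (a : arc) : point :=
  match a with
  | Seg _ q => q
  | Circ c r _ t1 => (fst c + r * cos t1, snd c + r * sin t1)
  end.

Definition is_endpoint (a : arc) (x : point) : Prop := x = arc_src a \/ x = arc_tgt a.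

Definition dummy_arc : arc := Seg (0, 0) (0, 0).

Definition circular_curve (gamma : pset) (l : list arc) : Prop :=
  homeomorphic_to_interval gamma /\
  (forall a, In a l -> arc_valid a) /\
  (forall x, gamma x <-> exists a, In a l /\ arc_pts a x) /\
  (forall i j, (i < j)%nat -> (j < length l)%nat -> forall x,
     arc_pts (nth i l dummy_arc) x -> arc_pts (nth j l dummy_arc) x ->
     is_endpoint (nth i l dummy_arc) x /\ is_endpoint (nth j l dummy_arc) x).

(* complexity: number of arcs plus number of (distinct) vertices *)
Definition endpoints (l : list arc) : list point :=
  flat_map (fun a => [arc_src a; arc_tgt a]) l.

Definition complexity (l : list arc) : nat :=
  (length l + length (nodup point_eq_dec (endpoints l)))%nat.

Definition in_S1 (v : point) : Prop := fst v ^ 2 + snd v ^ 2 = 1.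

Definition monotone_in_dir (v : point) (gamma : pset) : Prop :=
  exists f : R -> point, homeo_unit_interval f gamma /\
    forall a b, unit_interval a -> unit_interval b -> a < b ->
      inner v (f a) < inner v (f b).

Definition mutually_monotone (gamma gamma' : pset) : Prop :=
  exists v, in_S1 v /\ monotone_in_dir v gamma /\ monotone_in_dir v gamma'.

Definition proper_intersection (gamma gamma' : pset) (p : point) : Prop :=
  gamma p /\ gamma' p /\
  exists eps, 0 < eps /\
    forall q, gamma q -> gamma' q -> dist p q < eps -> q = p.

From Pilot Require Import Defs.
From Stdlib Require Import Reals List Lra Lia Classical ClassicalEpsilon.

Open Scope R_scope.

(* Project both curves on a direction [v] in which both are monotone.  Heights then
   identify points of each curve, and distinct arcs of one curve have disjoint open
   height ranges.  A proper intersection point whose height is not the height of a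
   vertex lies inside an arc [a] of one curve and an arc [a'] of the other; charge it to
   whichever of the two starts higher, say [a].  All points charged to [a] have the same
   partner [a'], namely the unique arc of the other curve covering the heights just above
   the start of [a].  Two circular arcs with three common points lie on one line or one
   circle, so they overlap near every common interior point, which is then not proper.
   Hence an arc is charged at most twice and a vertex height carries at most one point,
   which gives at most [6 (m + m')] proper intersection points. *)

Definition arc_lo (a : arc) : R := match a with Seg _ _ => 0 | Circ _ _ t0 _ => t0 end.
Definition arc_hi (a : arc) : R := match a with Seg _ _ => 1 | Circ _ _ _ t1 => t1 end.

Definition arc_param (a : arc) (t : R) : point :=
  match a with
  | Seg p q => ((1 - t) * fst p + t * fst q, (1 - t) * snd p + t * snd q)
  | Circ c r _ _ => (fst c + r * cos t, snd c + r * sin t)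
  end.

Lemma arc_pts_param a z :
  arc_pts a z <-> exists t, arc_lo a <= t <= arc_hi a /\ z = arc_param a t.
Proof. destruct a; simpl; tauto. Qed.

Lemma arc_param_pts a t : arc_lo a <= t <= arc_hi a -> arc_pts a (arc_param a t).
Proof. intros Ht. apply arc_pts_param. exists t; split; [exact Ht|reflexivity]. Qed.

Lemma arc_src_param a : arc_src a = arc_param a (arc_lo a).
Proof. destruct a as [[p1 p2] q|c r t0 t1]; simpl; f_equal; ring. Qed.

Lemma arc_tgt_param a : arc_tgt a = arc_param a (arc_hi a).
Proof. destruct a as [p [q1 q2]|c r t0 t1]; simpl; f_equal; ring. Qed.

Lemma arc_lo_lt_hi a : arc_valid a -> arc_lo a < arc_hi a.
Proof. destruct a; simpl; intros; lra. Qed.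

Lemma arc_param_interior a p : arc_pts a p -> ~ is_endpoint a p ->
  exists t, arc_lo a < t < arc_hi a /\ p = arc_param a t.
Proof.
  intros Hp Hend. apply arc_pts_param in Hp as [t [[Hlo Hhi] ->]].
  exists t; split; [|reflexivity].
  destruct Hlo as [Hlo|Hlo]; [destruct Hhi as [Hhi|Hhi]; [lra|]|]; subst;
    exfalso; apply Hend; unfold is_endpoint;
    [right; symmetry; apply arc_tgt_param | left; symmetry; apply arc_src_param].
Qed.

Lemma sin_sq_add_cos_sq x : sin x ^ 2 + cos x ^ 2 = 1.
Proof. pose proof (sin2_cos2 x) as H. unfold Rsqr in H. lra. Qed.

(* [1 - cos (t' - t) = 2 sin ((t' - t) / 2) ^ 2] and the sine is positive on [(0, PI)]. *)
Lemma cos_sin_inj t t' : t < t' < t + 2 * PI ->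
  cos t = cos t' -> sin t = sin t' -> False.
Proof.
  intros Ht Hc Hs.
  assert (Hcos : cos (2 * ((t' - t) / 2)) = 1).
  { replace (2 * ((t' - t) / 2)) with (t' - t) by field.
    rewrite cos_minus, <- Hc, <- Hs. pose proof (sin_sq_add_cos_sq t). lra. }
  rewrite cos_2a_sin in Hcos.
  assert (0 < sin ((t' - t) / 2)) by (apply sin_gt_0; lra).
  nra.
Qed.

Lemma arc_param_inj a s t : arc_valid a ->
  arc_lo a <= s <= arc_hi a -> arc_lo a <= t <= arc_hi a ->
  arc_param a s = arc_param a t -> s = t.
Proof.
  destruct a as [[p1 p2] [q1 q2]|c r t0 t1]; simpl; intros Hv Hs Ht E;
    injection E; intros E2 E1.
  - destruct (Req_dec s t) as [|Hne]; [assumption|].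
    exfalso; apply Hv; f_equal; apply Rmult_eq_reg_l with (s - t);
      try lra; ring_simplify; ring_simplify in E1; ring_simplify in E2; lra.
  - destruct Hv as [Hr Ht01].
    assert (cos s = cos t) by (apply Rmult_eq_reg_l with r; lra).
    assert (sin s = sin t) by (apply Rmult_eq_reg_l with r; lra).
    destruct (Rtotal_order s t) as [Hl|[Hl|Hl]]; [exfalso|assumption|exfalso].
    + apply (cos_sin_inj s t); [lra|assumption|assumption].
    + apply (cos_sin_inj t s); [lra|congruence|congruence].
Qed.

Definition sqdist (p q : point) : R := (fst p - fst q) ^ 2 + (snd p - snd q) ^ 2.

Lemma sqdist_nonneg p q : 0 <= sqdist p q.
Proof.
  unfold sqdist. pose proof (pow2_ge_0 (fst p - fst q)). pose proof (pow2_ge_0 (snd p - snd q)).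
  lra.
Qed.

Lemma sqdist_pos p q : p <> q -> 0 < sqdist p q.
Proof.
  destruct p as [p1 p2], q as [q1 q2]; unfold sqdist; simpl; intros H.
  assert (Hsq : forall x, x <> 0 -> 0 < x ^ 2)
    by (intros x Hx; replace (x ^ 2) with (Rsqr x) by (unfold Rsqr; ring);
        apply Rlt_0_sqr, Hx).
  destruct (Req_dec p1 q1) as [->|H1].
  - destruct (Req_dec p2 q2) as [->|H2]; [congruence|].
    assert (0 < (p2 - q2) ^ 2) by (apply Hsq; lra).
    pose proof (pow2_ge_0 (q1 - q1)); lra.
  - assert (0 < (p1 - q1) ^ 2) by (apply Hsq; lra).
    pose proof (pow2_ge_0 (p2 - q2)); lra.
Qed.

Lemma dist_lt_of_sqdist_lt p q e : 0 < e -> sqdist p q < e ^ 2 -> Defs.dist p q < e.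
Proof.
  intros He H. unfold Defs.dist. rewrite <- (sqrt_pow2 e) by lra.
  apply sqrt_lt_1; [apply sqdist_nonneg|apply pow2_ge_0|exact H].
Qed.

Lemma arc_param_step_sqdist a : exists K, 0 < K /\
  forall t u, 0 <= u <= 1 -> sqdist (arc_param a t) (arc_param a (t + u)) <= K * u ^ 2.
Proof.
  destruct a as [p q|c r t0 t1]; simpl.
  - exists (sqdist q p + 1). split; [pose proof (sqdist_nonneg q p); lra|].
    intros t u _.
    replace (sqdist _ _) with (sqdist q p * u ^ 2) by (unfold sqdist; simpl; ring).
    pose proof (pow2_ge_0 u); nra.
  - exists (r ^ 2 + 1). split; [pose proof (pow2_ge_0 r); lra|]. intros t u Hu.
    replace (sqdist _ _) with (r ^ 2 * (2 - 2 * cos u)).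
    2:{ unfold sqdist; simpl. rewrite cos_plus, sin_plus.
        transitivity (r ^ 2 * ((sin t ^ 2 + cos t ^ 2) *
                               (1 - 2 * cos u + (sin u ^ 2 + cos u ^ 2))));
          [rewrite !sin_sq_add_cos_sq; ring|ring]. }
    replace u with (2 * (u / 2)) at 1 by field. rewrite cos_2a_sin.
    assert (0 <= sin (u / 2) <= u / 2).
    { destruct (Req_dec u 0) as [->|Hu0].
      - replace (0 / 2) with 0 by field. rewrite sin_0. lra.
      - pose proof PI2_1. pose proof (sin_lt_x (u / 2)).
        pose proof (sin_ge_0 (u / 2)). lra. }
    assert (4 * (sin (u / 2) * sin (u / 2)) <= u ^ 2) by nra.
    pose proof (pow2_ge_0 r); pose proof (pow2_ge_0 u); nra.
Qed.

Definition along (z d : point) (s : R) : point := (fst z + s * fst d, snd z + s * snd d).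

Definition on_line (z d p : point) : Prop := exists s, p = along z d s.

Lemma on_line_base z d : on_line z d z.
Proof. exists 0. destruct z; unfold along; simpl; f_equal; ring. Qed.

Lemma line_circle_at_most_two z d c R2 x y w : d <> (0, 0) ->
  on_line z d x -> on_line z d y -> on_line z d w ->
  sqdist x c = R2 -> sqdist y c = R2 -> sqdist w c = R2 ->
  x = y \/ x = w \/ y = w.
Proof.
  intros Hd [s1 ->] [s2 ->] [s3 ->] E1 E2 E3.
  set (N := sqdist d (0, 0)).
  set (B := (fst z - fst c) * fst d + (snd z - snd c) * snd d).
  assert (HN : 0 < N) by (apply sqdist_pos, Hd).
  (* Along the line the squared distance to [c] is a quadratic in [s] with leading
     coefficient [N], so it takes each value at most twice. *)
  assert (Hroots : forall s s', sqdist (along z d s) c = sqdist (along z d s') c ->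
            s = s' \/ N * (s + s') + 2 * B = 0).
  { intros s s' E.
    assert (Hfac : (s - s') * (N * (s + s') + 2 * B) = 0).
    { transitivity (sqdist (along z d s) c - sqdist (along z d s') c); [|lra].
      unfold along, N, B, sqdist; simpl; ring. }
    apply Rmult_integral in Hfac as [|]; [left|right]; lra. }
  destruct (Hroots s1 s2 (eq_trans E1 (eq_sym E2))) as [->|H12]; [left; reflexivity|].
  destruct (Hroots s1 s3 (eq_trans E1 (eq_sym E3))) as [->|H13]; [right; left; reflexivity|].
  right; right. f_equal. apply Rmult_eq_reg_l with N; lra.
Qed.

Lemma seg_on_line p q x :
  arc_pts (Seg p q) x -> on_line p (fst q - fst p, snd q - snd p) x.
Proof. intros [t [_ ->]]. exists t. unfold along; simpl; f_equal; ring. Qed.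

Lemma circ_sqdist c r t0 t1 x : arc_pts (Circ c r t0 t1) x -> sqdist x c = r ^ 2.
Proof.
  intros [t [_ ->]]. unfold sqdist; simpl.
  transitivity (r ^ 2 * (sin t ^ 2 + cos t ^ 2)); [ring|].
  rewrite sin_sq_add_cos_sq; ring.
Qed.

(* Subtracting the two circle equations leaves a linear equation: the radical axis. *)
Lemma two_circles_on_line c c' R R' x w : c <> c' ->
  sqdist x c = R -> sqdist x c' = R' -> sqdist w c = R -> sqdist w c' = R' ->
  on_line x (snd c - snd c', fst c' - fst c) w.
Proof.
  intros Hc Ex Ex' Ew Ew'.
  assert (HN : 0 < sqdist c' c) by (apply sqdist_pos; congruence).
  assert (Hperp : (fst w - fst x) * (fst c' - fst c) + (snd w - snd x) * (snd c' - snd c) = 0).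
  { transitivity ((sqdist w c - sqdist w c' - (sqdist x c - sqdist x c')) / 2);
      [unfold sqdist; field|rewrite Ex, Ex', Ew, Ew'; field]. }
  exists ((- (fst w - fst x) * (snd c' - snd c) + (snd w - snd x) * (fst c' - fst c))
          / sqdist c' c).
  destruct c as [c1 c2], c' as [d1 d2], w as [w1 w2], x as [x1 x2].
  unfold along, sqdist in *; simpl in *.
  assert ((d1 - c1) * ((w1 - x1) * (d1 - c1) + (w2 - x2) * (d2 - c2)) = 0)
    by (rewrite Hperp; ring).
  assert ((d2 - c2) * ((w1 - x1) * (d1 - c1) + (w2 - x2) * (d2 - c2)) = 0)
    by (rewrite Hperp; ring).
  f_equal; field_simplify_eq; lra.
Qed.

Lemma seg_circ_at_most_two p q c r t0 t1 x y w : p <> q ->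
  arc_pts (Seg p q) x -> arc_pts (Seg p q) y -> arc_pts (Seg p q) w ->
  arc_pts (Circ c r t0 t1) x -> arc_pts (Circ c r t0 t1) y -> arc_pts (Circ c r t0 t1) w ->
  x = y \/ x = w \/ y = w.
Proof.
  intros Hpq Sx Sy Sw Cx Cy Cw.
  apply (line_circle_at_most_two p (fst q - fst p, snd q - snd p) c (r ^ 2));
    try (apply seg_on_line; assumption); try (eapply circ_sqdist; eassumption).
  intros E. apply Hpq. destruct p, q. injection E; intros. simpl in *. f_equal; lra.
Qed.

Lemma circ_circ_at_most_two c r t0 t1 c' r' t0' t1' x y w : c <> c' ->
  arc_pts (Circ c r t0 t1) x -> arc_pts (Circ c r t0 t1) y -> arc_pts (Circ c r t0 t1) w ->
  arc_pts (Circ c' r' t0' t1') x -> arc_pts (Circ c' r' t0' t1') y ->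
  arc_pts (Circ c' r' t0' t1') w ->
  x = y \/ x = w \/ y = w.
Proof.
  intros Hc Cx Cy Cw Dx Dy Dw.
  apply circ_sqdist in Cx, Cy, Cw, Dx, Dy, Dw.
  apply (line_circle_at_most_two x (snd c - snd c', fst c' - fst c) c (r ^ 2));
    try assumption.
  - intros E. apply Hc. destruct c, c'. injection E; intros. simpl in *. f_equal; lra.
  - apply on_line_base.
  - apply (two_circles_on_line c c' (r ^ 2) (r' ^ 2)); assumption.
  - apply (two_circles_on_line c c' (r ^ 2) (r' ^ 2)); assumption.
Qed.

Lemma exists_pos_below a b c e : 0 < a -> 0 < b -> 0 < c -> 0 < e ->
  exists u, 0 < u /\ u <= a /\ u <= b /\ u <= c /\ u <= e.
Proof.
  intros. exists (Rmin (Rmin a b) (Rmin c e)).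
  unfold Rmin; repeat destruct Rle_dec; repeat split; lra.
Qed.

Lemma shared_germ_not_proper g g' a a' t : arc_valid a ->
  (forall z, arc_pts a z -> g z) -> (forall z, arc_pts a' z -> g' z) ->
  arc_lo a < t < arc_hi a ->
  (exists d, 0 < d /\ forall u, 0 < u < d -> arc_pts a' (arc_param a (t + u))) ->
  ~ proper_intersection g g' (arc_param a t).
Proof.
  intros Ha G G' Ht [d [Hd Hgerm]] [_ [_ [eps [Heps Hiso]]]].
  destruct (arc_param_step_sqdist a) as [K [HK Hstep]].
  destruct (exists_pos_below (d / 2) (arc_hi a - t) 1 (eps / (2 * (K + 1))))
    as [u [Hu [Hud [Huhi [Hu1 Hueps]]]]];
    [lra|lra|lra|apply Rdiv_lt_0_compat; lra|].
  assert (Hsmall : 2 * (K + 1) * u <= eps).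
  { apply Rmult_le_compat_l with (r := 2 * (K + 1)) in Hueps; [|lra].
    replace (2 * (K + 1) * (eps / (2 * (K + 1)))) with eps in Hueps by (field; lra).
    exact Hueps. }
  assert (Heq : arc_param a (t + u) = arc_param a t).
  { apply Hiso; [apply G, arc_param_pts; lra|apply G', Hgerm; lra|].
    apply dist_lt_of_sqdist_lt; [assumption|].
    specialize (Hstep t u ltac:(lra)).
    assert (K * u ^ 2 < (2 * (K + 1) * u) ^ 2) by nra.
    assert ((2 * (K + 1) * u) ^ 2 <= eps ^ 2) by (apply pow_incr; nra).
    lra. }
  apply arc_param_inj in Heq; [lra|assumption|lra|lra].
Qed.

(* Two common points force [Q - P] to be parallel to [Q' - P'], with ratio [lam]. *)
Lemma seg_seg_germ P Q P' Q' t t' t2 t2' : 0 < t' < 1 -> t <> t2 ->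
  arc_param (Seg P Q) t = arc_param (Seg P' Q') t' ->
  arc_param (Seg P Q) t2 = arc_param (Seg P' Q') t2' ->
  exists d, 0 < d /\ forall u, 0 < u < d -> arc_pts (Seg P' Q') (arc_param (Seg P Q) (t + u)).
Proof.
  intros Ht' Ht E E2.
  destruct P as [P1 P2], Q as [Q1 Q2], P' as [R1 R2], Q' as [S1 S2]; simpl in *.
  injection E; intros Ey Ex. injection E2; intros E2y E2x.
  set (lam := (t' - t2') / (t - t2)).
  assert (Hx : Q1 - P1 = lam * (S1 - R1))
    by (unfold lam; apply Rmult_eq_reg_l with (t - t2); [field_simplify; lra|lra]).
  assert (Hy : Q2 - P2 = lam * (S2 - R2))
    by (unfold lam; apply Rmult_eq_reg_l with (t - t2); [field_simplify; lra|lra]).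
  set (m := Rmin t' (1 - t')).
  assert (Hm : 0 < m /\ m <= t' /\ m <= 1 - t')
    by (unfold m, Rmin; destruct Rle_dec; lra).
  pose proof (Rabs_pos lam).
  exists (m / (Rabs lam + 1)). split; [apply Rdiv_lt_0_compat; lra|].
  intros u Hu. exists (t' + lam * u).
  assert (Hlu : Rabs (lam * u) < m).
  { rewrite Rabs_mult, (Rabs_right u) by lra.
    destruct Hu as [Hu0 Hud].
    apply Rmult_lt_compat_l with (r := Rabs lam + 1) in Hud; [|lra].
    replace ((Rabs lam + 1) * (m / (Rabs lam + 1))) with m in Hud by (field; lra).
    nra. }
  apply Rabs_def2 in Hlu.
  split; [lra|]. f_equal.
  - transitivity ((1 - t) * P1 + t * Q1 + u * (Q1 - P1)); [ring|].
    rewrite Ex, Hx. ring.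
  - transitivity ((1 - t) * P2 + t * Q2 + u * (Q2 - P2)); [ring|].
    rewrite Ey, Hy. ring.
Qed.

Lemma circ_circ_germ c r t0 t1 t0' t1' t t' : t0' <= t' < t1' ->
  cos t = cos t' -> sin t = sin t' ->
  exists d, 0 < d /\ forall u, 0 < u < d ->
    arc_pts (Circ c r t0' t1') (arc_param (Circ c r t0 t1) (t + u)).
Proof.
  intros Ht' Hc Hs. exists (t1' - t'). split; [lra|].
  intros u Hu. exists (t' + u). split; [lra|]. simpl.
  rewrite !cos_plus, !sin_plus, Hc, Hs. reflexivity.
Qed.

Lemma circle_param_eq (c : point) r r' t t' : 0 < r -> 0 < r' ->
  (fst c + r * cos t, snd c + r * sin t) = (fst c + r' * cos t', snd c + r' * sin t') ->
  r = r' /\ cos t = cos t' /\ sin t = sin t'.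
Proof.
  intros Hr Hr' E. injection E; intros Es Ec.
  assert (Hrr : r = r').
  { assert (r ^ 2 = r' ^ 2); [|nra].
    transitivity ((r * sin t) ^ 2 + (r * cos t) ^ 2);
      [rewrite <- (Rmult_1_r (r ^ 2)), <- (sin_sq_add_cos_sq t); ring|].
    replace (r * sin t) with (r' * sin t') by lra.
    replace (r * cos t) with (r' * cos t') by lra.
    rewrite <- (Rmult_1_r (r' ^ 2)), <- (sin_sq_add_cos_sq t'); ring. }
  subst r'. split; [reflexivity|].
  split; apply Rmult_eq_reg_l with r; lra.
Qed.

(* Two arcs with three common points lie on one line or one circle, so near a common
   interior point they overlap along a germ. *)
Lemma arcs_common_triple_not_proper g g' a a' p q r : arc_valid a -> arc_valid a' ->
  (forall z, arc_pts a z -> g z) -> (forall z, arc_pts a' z -> g' z) ->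
  arc_pts a p -> arc_pts a q -> arc_pts a r ->
  arc_pts a' p -> arc_pts a' q -> arc_pts a' r ->
  p <> q -> p <> r -> q <> r -> ~ is_endpoint a p -> ~ is_endpoint a' p ->
  ~ proper_intersection g g' p.
Proof.
  intros Va Va' G G' Ap Aq Ar Bp Bq Br Npq Npr Nqr Hend Hend'.
  assert (Hdistinct : ~ (p = q \/ p = r \/ q = r)) by tauto.
  destruct (arc_param_interior a p Ap Hend) as [t [Ht Et]].
  destruct (arc_param_interior a' p Bp Hend') as [t' [Ht' Et']].
  rewrite Et in Et' |- *.
  destruct a as [P Q|c rr t0 t1], a' as [P' Q'|c' rr' t0' t1']; simpl in Ht'.
  - apply arc_pts_param in Aq as [t2 [_ E2]]. apply arc_pts_param in Bq as [t2' [_ E2']].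
    apply (shared_germ_not_proper g g' _ _ t Va G G' Ht).
    apply (seg_seg_germ P Q P' Q' t t' t2 t2'); [lra| |assumption|congruence].
    intros <-. apply Npq. congruence.
  - exfalso; apply Hdistinct, (seg_circ_at_most_two P Q c' rr' t0' t1'); assumption.
  - exfalso; apply Hdistinct, (seg_circ_at_most_two P' Q' c rr t0 t1); assumption.
  - destruct (point_eq_dec c c') as [<-|Hc].
    + destruct (circle_param_eq c rr rr' t t') as [<- [Hcos Hsin]];
        [exact (proj1 Va)|exact (proj1 Va')|exact Et'|].
      apply (shared_germ_not_proper g g' _ _ t Va G G' Ht).
      apply (circ_circ_germ c rr t0 t1 t0' t1' t t'); [lra|assumption|assumption].
    + exfalso; apply Hdistinct, (circ_circ_at_most_two c rr t0 t1 c' rr' t0' t1'); assumption.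
Qed.

Definition height_injective (v : point) (g : pset) : Prop :=
  forall p q, g p -> g q -> inner v p = inner v q -> p = q.

Lemma monotone_height_injective v g : monotone_in_dir v g -> height_injective v g.
Proof.
  intros [f [[_ [_ [Him _]]] Hmono]] p q Hp Hq E.
  apply Him in Hp as [a [Ha <-]]. apply Him in Hq as [b [Hb <-]].
  destruct (Rtotal_order a b) as [H|[->|H]]; [|reflexivity|].
  - specialize (Hmono a b Ha Hb H). lra.
  - specialize (Hmono b a Hb Ha H). lra.
Qed.

Lemma IVT_value (h : R -> R) a b y : continuity h -> a <= b ->
  (h a - y) * (h b - y) <= 0 -> exists z, a <= z <= b /\ h z = y.
Proof.
  intros Hh Hab Hy.
  destruct (IVT_cor (fun x => h x - y) a b) as [z [Hz E]];
    [apply continuity_minus; [exact Hh|apply continuity_const; intros ? ?; reflexivity]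
    |exact Hab|exact Hy|].
  exists z; split; [exact Hz|lra].
Qed.

(* A value between [max (h lo) (h hi)] and [h t] would be taken on both sides of [t]. *)
Lemma continuous_injective_no_peak (h : R -> R) lo hi t : continuity h ->
  (forall s s', lo <= s <= hi -> lo <= s' <= hi -> h s = h s' -> s = s') ->
  lo <= t <= hi -> h lo < h t -> h hi < h t -> False.
Proof.
  intros Hh Hinj Ht Hlo Hhi.
  set (y := (Rmax (h lo) (h hi) + h t) / 2).
  assert (Hy : h lo < y /\ h hi < y /\ y < h t)
    by (unfold y, Rmax; destruct Rle_dec; lra).
  destruct Hy as [Hy1 [Hy2 Hy3]].
  destruct (IVT_value h lo t y Hh) as [s1 [Hs1 E1]]; [lra|nra|].
  destruct (IVT_value h t hi y Hh) as [s2 [Hs2 E2]]; [lra|nra|].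
  assert (s1 = s2) by (apply Hinj; lra).
  assert (Hs1t : s1 = t) by lra.
  rewrite Hs1t in E1. lra.
Qed.

Lemma continuous_injective_between (h : R -> R) lo hi t : continuity h ->
  (forall s s', lo <= s <= hi -> lo <= s' <= hi -> h s = h s' -> s = s') ->
  lo <= t <= hi -> Rmin (h lo) (h hi) <= h t <= Rmax (h lo) (h hi).
Proof.
  intros Hh Hinj Ht. split; apply Rnot_lt_le; intros Hout.
  - apply (continuous_injective_no_peak (fun s => - h s) lo hi t).
    + apply continuity_opp, Hh.
    + intros s s' Hs Hs' E. apply Hinj; [exact Hs|exact Hs'|lra].
    + exact Ht.
    + pose proof (Rmin_l (h lo) (h hi)); lra.
    + pose proof (Rmin_r (h lo) (h hi)); lra.
  - apply (continuous_injective_no_peak h lo hi t Hh Hinj Ht).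
    + pose proof (Rmax_l (h lo) (h hi)); lra.
    + pose proof (Rmax_r (h lo) (h hi)); lra.
Qed.

Definition arc_hmin (v : point) (a : arc) : R := Rmin (inner v (arc_src a)) (inner v (arc_tgt a)).
Definition arc_hmax (v : point) (a : arc) : R := Rmax (inner v (arc_src a)) (inner v (arc_tgt a)).

Lemma arc_height_continuous v a : continuity (fun t => inner v (arc_param a t)).
Proof. destruct a; unfold inner; simpl; reg. Qed.

Lemma arc_height_between v g a z : height_injective v g -> arc_valid a ->
  (forall z, arc_pts a z -> g z) -> arc_pts a z ->
  arc_hmin v a <= inner v z <= arc_hmax v a.
Proof.
  intros Hinj Ha G Hz. apply arc_pts_param in Hz as [t [Ht ->]].
  unfold arc_hmin, arc_hmax. rewrite arc_src_param, arc_tgt_param.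
  apply (continuous_injective_between (fun s => inner v (arc_param a s)));
    [apply arc_height_continuous| |exact Ht].
  intros s s' Hs Hs' E. apply (arc_param_inj a); try assumption.
  apply Hinj; [apply G, arc_param_pts, Hs|apply G, arc_param_pts, Hs'|exact E].
Qed.

Lemma arc_height_ivt v a y : arc_valid a -> arc_hmin v a <= y <= arc_hmax v a ->
  exists z, arc_pts a z /\ inner v z = y.
Proof.
  intros Ha Hy. unfold arc_hmin, arc_hmax in Hy. rewrite arc_src_param, arc_tgt_param in Hy.
  destruct (IVT_value (fun s => inner v (arc_param a s)) (arc_lo a) (arc_hi a) y)
    as [t [Ht E]].
  - apply arc_height_continuous.
  - apply Rlt_le, arc_lo_lt_hi, Ha.
  - revert Hy. unfold Rmin, Rmax. destruct Rle_dec; intros; nra.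
  - exists (arc_param a t). split; [apply arc_param_pts, Ht|exact E].
Qed.

Lemma endpoint_height_not_open v a z : is_endpoint a z ->
  ~ (arc_hmin v a < inner v z < arc_hmax v a).
Proof.
  unfold arc_hmin, arc_hmax, Rmin, Rmax. intros [->| ->]; destruct Rle_dec; lra.
Qed.

Lemma circular_curve_arc g l a : circular_curve g l -> In a l ->
  arc_valid a /\ forall z, arc_pts a z -> g z.
Proof.
  intros [_ [Hval [Hg _]]] Ha. split; [apply Hval, Ha|].
  intros z Hz. apply Hg. exists a; split; assumption.
Qed.

Lemma arcs_common_open_height_eq v g l a1 a2 y :
  circular_curve g l -> height_injective v g -> In a1 l -> In a2 l ->
  arc_hmin v a1 < y < arc_hmax v a1 -> arc_hmin v a2 < y < arc_hmax v a2 -> a1 = a2.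
Proof.
  intros Hc Hinj H1 H2 Y1 Y2.
  destruct (circular_curve_arc g l a1 Hc H1) as [V1 G1].
  destruct (circular_curve_arc g l a2 Hc H2) as [V2 G2].
  destruct (arc_height_ivt v a1 y V1) as [z1 [Z1 E1]]; [lra|].
  destruct (arc_height_ivt v a2 y V2) as [z2 [Z2 E2]]; [lra|].
  assert (z1 = z2) as <- by (apply Hinj; [apply G1, Z1|apply G2, Z2|congruence]).
  destruct Hc as [_ [_ [_ Hmeet]]].
  destruct (In_nth l a1 dummy_arc H1) as [i [Hi <-]].
  destruct (In_nth l a2 dummy_arc H2) as [j [Hj <-]].
  destruct (Nat.lt_total i j) as [Hij|[<-|Hij]]; [exfalso|reflexivity|exfalso].
  - apply (endpoint_height_not_open v (nth i l dummy_arc) z1); [|congruence].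
    apply (Hmeet i j Hij Hj z1 Z1 Z2).
  - apply (endpoint_height_not_open v (nth j l dummy_arc) z1); [|congruence].
    apply (Hmeet j i Hij Hi z1 Z2 Z1).
Qed.

Lemma in_endpoints a l : In a l ->
  In (arc_src a) (endpoints l) /\ In (arc_tgt a) (endpoints l).
Proof.
  intros H. unfold endpoints. split; apply in_flat_map; exists a; split; simpl; auto.
Qed.

Lemma length_endpoints l : length (endpoints l) = (2 * length l)%nat.
Proof. induction l as [|a l IH]; simpl; [reflexivity|]. rewrite IH. lia. Qed.

Definition avoids_vertex_heights (v : point) (l : list arc) (p : point) : Prop :=
  forall e, In e (endpoints l) -> inner v e <> inner v p.

Lemma avoids_not_endpoint v l a p : In a l -> avoids_vertex_heights v l p ->
  ~ is_endpoint a p.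
Proof.
  intros Ha Hav [E|E]; destruct (in_endpoints a l Ha) as [Is It];
    [apply (Hav _ Is)|apply (Hav _ It)]; rewrite E; reflexivity.
Qed.

Lemma arc_height_strict v g l a x : circular_curve g l -> height_injective v g ->
  In a l -> arc_pts a x -> avoids_vertex_heights v l x ->
  arc_hmin v a < inner v x < arc_hmax v a.
Proof.
  intros Hc Hinj Ha Hx Hav.
  destruct (circular_curve_arc g l a Hc Ha) as [Va Ga].
  destruct (in_endpoints a l Ha) as [Is It].
  pose proof (arc_height_between v g a x Hinj Va Ga Hx) as Hb.
  pose proof (Hav _ Is). pose proof (Hav _ It).
  revert Hb. unfold arc_hmin, arc_hmax, Rmin, Rmax. destruct Rle_dec; lra.
Qed.

Definition charged_via (v : point) (l l' : list arc) (a a' : arc) (p : point) : Prop :=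
  avoids_vertex_heights v l p /\ avoids_vertex_heights v l' p /\ In a l /\ In a' l' /\
  arc_pts a p /\ arc_pts a' p /\ arc_hmin v a' <= arc_hmin v a.

Definition charged_to (v : point) (l l' : list arc) (a : arc) (p : point) : Prop :=
  exists a', charged_via v l l' a a' p.

(* Both partner arcs contain heights just above [arc_hmin v a], where the height ranges of
   distinct arcs of [g'] cannot overlap. *)
Lemma charged_via_partner_eq v g g' l l' a b b' x y :
  circular_curve g l -> circular_curve g' l' -> height_injective v g -> height_injective v g' ->
  charged_via v l l' a b x -> charged_via v l l' a b' y -> b = b'.
Proof.
  intros Hc Hc' Hinj Hinj'
    [Ax1 [Ax2 [Ha [Hb [Ax [Bx Lx]]]]]] [Ay1 [Ay2 [_ [Hb' [Ay [By Ly]]]]]].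
  pose proof (arc_height_strict v g l a x Hc Hinj Ha Ax Ax1).
  pose proof (arc_height_strict v g l a y Hc Hinj Ha Ay Ay1).
  pose proof (arc_height_strict v g' l' b x Hc' Hinj' Hb Bx Ax2).
  pose proof (arc_height_strict v g' l' b' y Hc' Hinj' Hb' By Ay2).
  apply (arcs_common_open_height_eq v g' l' b b'
           ((arc_hmin v a + Rmin (inner v x) (inner v y)) / 2) Hc' Hinj' Hb Hb');
    unfold Rmin; destruct Rle_dec; lra.
Qed.

Lemma charged_to_at_most_two v g g' l l' a p q r :
  circular_curve g l -> circular_curve g' l' -> height_injective v g -> height_injective v g' ->
  proper_intersection g g' p ->
  charged_to v l l' a p -> charged_to v l l' a q -> charged_to v l l' a r ->
  p = q \/ p = r \/ q = r.
Proof.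
  intros Hc Hc' Hinj Hinj' Hp [b Cp] [bq Cq] [br Cr].
  assert (bq = b) as -> by (apply (charged_via_partner_eq v g g' l l' a bq b q p); assumption).
  assert (br = b) as -> by (apply (charged_via_partner_eq v g g' l l' a br b r p); assumption).
  destruct Cp as [Ap1 [Ap2 [Ha [Hb [Ap [Bp _]]]]]].
  destruct Cq as [_ [_ [_ [_ [Aq [Bq _]]]]]]. destruct Cr as [_ [_ [_ [_ [Ar [Br _]]]]]].
  destruct (circular_curve_arc g l a Hc Ha) as [Va Ga].
  destruct (circular_curve_arc g' l' b Hc' Hb) as [Vb Gb].
  destruct (classic (p = q \/ p = r \/ q = r)) as [|Hdistinct]; [assumption|exfalso].
  apply (arcs_common_triple_not_proper g g' a b p q r Va Vb Ga Gb Ap Aq Ar Bp Bq Br);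
    [tauto|tauto|tauto|apply (avoids_not_endpoint v l); assumption
    |apply (avoids_not_endpoint v l'); assumption|exact Hp].
Qed.

Inductive charge : Type :=
  | ChargeFirst (a : arc)
  | ChargeSecond (a : arc)
  | ChargeLevel (e : point).

Definition charge_holds (v : point) (l l' : list arc) (c : charge) (p : point) : Prop :=
  match c with
  | ChargeFirst a => charged_to v l l' a p
  | ChargeSecond a => charged_to v l' l a p
  | ChargeLevel e => inner v e = inner v p
  end.

Definition charges (l l' : list arc) : list charge :=
  map ChargeFirst l ++ map ChargeSecond l' ++ map ChargeLevel (endpoints l ++ endpoints l').

Lemma length_charges l l' : length (charges l l') = (3 * (length l + length l'))%nat.
Proof.
  unfold charges. rewrite !length_app, !length_map, length_app, !length_endpoints. lia.
Qed.

Lemma common_point_charged v g g' l l' p : circular_curve g l -> circular_curve g' l' ->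
  g p -> g' p -> exists c, In c (charges l l') /\ charge_holds v l l' c p.
Proof.
  intros Hc Hc' Gp Gp'. unfold charges.
  destruct (classic (exists e, In e (endpoints l ++ endpoints l') /\ inner v e = inner v p))
    as [[e [He Ee]]|Hno].
  { exists (ChargeLevel e). split; [|exact Ee].
    apply in_or_app; right; apply in_or_app; right; apply in_map, He. }
  assert (Hav : avoids_vertex_heights v l p)
    by (intros e He Ee; apply Hno; exists e; split; [apply in_or_app; left|]; assumption).
  assert (Hav' : avoids_vertex_heights v l' p)
    by (intros e He Ee; apply Hno; exists e; split; [apply in_or_app; right|]; assumption).
  destruct Hc as [_ [_ [Hg _]]], Hc' as [_ [_ [Hg' _]]].
  apply Hg in Gp as [a [Ha Pa]]. apply Hg' in Gp' as [a' [Ha' Pa']].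
  destruct (Rle_dec (arc_hmin v a') (arc_hmin v a)) as [Hle|Hlt].
  - exists (ChargeFirst a). split; [apply in_or_app; left; apply in_map, Ha|].
    exists a'. repeat split; assumption.
  - exists (ChargeSecond a').
    split; [apply in_or_app; right; apply in_or_app; left; apply in_map, Ha'|].
    exists a. repeat split; try assumption. lra.
Qed.

Lemma proper_intersection_sym g g' p :
  proper_intersection g g' p -> proper_intersection g' g p.
Proof.
  intros [G [G' [eps [Heps Hiso]]]]. repeat split; try assumption.
  exists eps. split; [exact Heps|]. intros q Gq Gq'. apply Hiso; assumption.
Qed.

Lemma charge_fiber_at_most_two v g g' l l' c p q r :
  circular_curve g l -> circular_curve g' l' -> height_injective v g -> height_injective v g' ->
  proper_intersection g g' p -> proper_intersection g g' q ->
  charge_holds v l l' c p -> charge_holds v l l' c q -> charge_holds v l l' c r ->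
  p = q \/ p = r \/ q = r.
Proof.
  intros Hc Hc' Hinj Hinj' Hp Hq Cp Cq Cr. destruct c as [a|a|e]; simpl in Cp, Cq, Cr.
  - apply (charged_to_at_most_two v g g' l l' a); assumption.
  - apply (charged_to_at_most_two v g' g l' l a);
      try apply proper_intersection_sym; assumption.
  - left. apply Hinj; [apply Hp|apply Hq|congruence].
Qed.

Lemma NoDup_length_le_2 {A : Type} (xs : list A) : NoDup xs ->
  (forall x y z, In x xs -> In y xs -> In z xs -> x = y \/ x = z \/ y = z) ->
  (length xs <= 2)%nat.
Proof.
  intros Hnd H. destruct xs as [|x [|y [|z xs]]]; simpl; try lia. exfalso.
  apply NoDup_cons_iff in Hnd as [Hx Hnd]. apply NoDup_cons_iff in Hnd as [Hy _].
  destruct (H x y z) as [<-|[<-|<-]]; simpl; auto; [apply Hx|apply Hx|apply Hy]; simpl; auto.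
Qed.

Lemma NoDup_length_le_cover {A K : Type} (R : K -> A -> Prop) (ks : list K) (xs : list A) :
  NoDup xs ->
  (forall x, In x xs -> exists k, In k ks /\ R k x) ->
  (forall k x y z, In x xs -> In y xs -> In z xs -> R k x -> R k y -> R k z ->
     x = y \/ x = z \/ y = z) ->
  (length xs <= 2 * length ks)%nat.
Proof.
  revert xs. induction ks as [|k ks IH]; intros xs Hnd Hcov Hfib.
  { destruct xs as [|x xs]; [simpl; lia|]. destruct (Hcov x (or_introl eq_refl)) as [k [[] _]]. }
  set (f := fun x => if excluded_middle_informative (R k x) then true else false).
  assert (Hf : forall x, f x = true <-> R k x)
    by (intros x; unfold f; destruct excluded_middle_informative; split; congruence || tauto).
  rewrite <- (filter_length f xs).
  assert (Hk : (length (filter f xs) <= 2)%nat).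
  { apply NoDup_length_le_2; [apply NoDup_filter, Hnd|].
    intros x y z Hx Hy Hz.
    apply filter_In in Hx as [Hx Fx], Hy as [Hy Fy], Hz as [Hz Fz].
    apply (Hfib k); try assumption; apply Hf; assumption. }
  assert (Hks : (length (filter (fun x => negb (f x)) xs) <= 2 * length ks)%nat).
  { apply IH; [apply NoDup_filter, Hnd| |].
    - intros x Hx. apply filter_In in Hx as [Hx Fx].
      destruct (Hcov x Hx) as [k' [[<-|Hk'] Rx]]; [|exists k'; split; assumption].
      apply Hf in Rx. rewrite Rx in Fx. discriminate.
    - intros k' x y z Hx Hy Hz.
      apply filter_In in Hx as [Hx _], Hy as [Hy _], Hz as [Hz _].
      apply Hfib; assumption. }
  simpl. lia.
Qed.

Theorem mainTheorem12 :
  exists C : nat,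
    forall (gamma gamma' : pset) (l l' : list arc),
      circular_curve gamma l -> circular_curve gamma' l' ->
      mutually_monotone gamma gamma' ->
      forall ps : list point,
        NoDup ps ->
        (forall p, In p ps -> proper_intersection gamma gamma' p) ->
        (length ps <= C * (complexity l + complexity l'))%nat.
Proof.
  exists 6%nat.
  intros g g' l l' Hc Hc' [v [_ [Hm Hm']]] ps Hnd Hps.
  pose proof (monotone_height_injective v g Hm) as Hinj.
  pose proof (monotone_height_injective v g' Hm') as Hinj'.
  apply Nat.le_trans with (2 * length (charges l l'))%nat.
  - apply (NoDup_length_le_cover (charge_holds v l l') (charges l l') ps Hnd).
    + intros p Hp. destruct (Hps p Hp) as [Gp [Gp' _]].
      apply (common_point_charged v g g' l l' p); assumption.
    + intros c p q r Hp Hq Hr.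
      apply (charge_fiber_at_most_two v g g' l l'); auto.
  - rewrite length_charges. unfold complexity. lia.
Qed.
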